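(* For $x=(a,b,c,d)\in\mathbb{Z}^4$, let $P(x)=b^2c^2+18abcd-4ac^3-4b^3d-27a^2d^2$. Writing $\mathcal{E}=2\mathbb{Z}$ and $\mathcal{O}=2\mathbb{Z}+1$, we have $P(x)\equiv 4\pmod{16}$ if and only if one of the following holds: (1) $a,b,c,d\in\mathcal{O}$ and $a+b+c+d\in2\mathcal{O}$; (2) $b,c\in\mathcal{E}$ and $ad\in2\mathcal{O}$; (3) $a\in2\mathcal{E}$, $b\in2\mathcal{O}$, $c\in\mathcal{O}$; (4) $d\in2\mathcal{E}$, $c\in2\mathcal{O}$, $b\in\mathcal{O}$; (5) $b+c\in\mathcal{O}$ and $a+c,\ b+d\in2\mathcal{E}$.
   Context: Here $2\mathcal{O}=\{2n: n\text{ odd}\}$ and $2\mathcal{E}=4\mathbb{Z}$. *)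

From Stdlib Require Import ZArith.
Open Scope Z_scope.

Definition inE (n : Z) : Prop := Z.Even n.
Definition inO (n : Z) : Prop := Z.Odd n.
Definition in2O (n : Z) : Prop := exists m : Z, Z.Odd m /\ n = 2 * m.
Definition in2E (n : Z) : Prop := exists m : Z, Z.Even m /\ n = 2 * m.

Definition P (a b c d : Z) : Z :=
  b^2 * c^2 + 18 * a * b * c * d - 4 * a * c^3 - 4 * b^3 * d - 27 * a^2 * d^2.

(* P is a polynomial with integer coefficients, so [P a b c d mod 16] only
   depends on the residues of a, b, c, d modulo 16; each of the five conditions
   only involves parities and residues modulo 4 of sums and products of a, b,
   c, d, hence also only depends on these residues.  Both sides are therefore
   decided by the 16^4 residue classes, which are checked by computation. *)

From Stdlib Require Import ZArith Lia Bool List.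
Open Scope Z_scope.

Lemma inO_iff_mod2 n : inO n <-> n mod 2 = 1.
Proof. unfold inO; rewrite <- Z.odd_spec, Zmod_odd; destruct (Z.odd n); split; congruence. Qed.

Lemma inE_iff_mod2 n : inE n <-> n mod 2 = 0.
Proof. unfold inE; rewrite <- Z.even_spec, Zmod_even; destruct (Z.even n); split; congruence. Qed.

Lemma exists_double_iff (Q : Z -> Prop) n :
  (exists m, Q m /\ n = 2 * m) <-> n mod 2 = 0 /\ Q (n / 2).
Proof.
  split.
  - intros [m [Qm ->]].
    rewrite Z.mul_comm, Z.mod_mul, Z.div_mul by lia; auto.
  - intros [n_even Qn]; exists (n / 2); split; [exact Qn|].
    now apply Z.div_exact.
Qed.

Lemma mod4_split n : n mod 4 = n mod 2 + 2 * ((n / 2) mod 2).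
Proof. exact (Z.rem_mul_r n 2 2 ltac:(lia) ltac:(lia)). Qed.

Lemma in2O_iff_mod4 n : in2O n <-> n mod 4 = 2.
Proof.
  unfold in2O; rewrite exists_double_iff, inO_iff_mod2, mod4_split.
  pose proof (Z.mod_pos_bound n 2); pose proof (Z.mod_pos_bound (n / 2) 2); lia.
Qed.

Lemma in2E_iff_mod4 n : in2E n <-> n mod 4 = 0.
Proof.
  unfold in2E; rewrite exists_double_iff, inE_iff_mod2, mod4_split.
  pose proof (Z.mod_pos_bound n 2); pose proof (Z.mod_pos_bound (n / 2) 2); lia.
Qed.

Lemma Zpow_eqm N x y k : eqm N x y -> eqm N (x ^ k) (y ^ k).
Proof. unfold eqm; intros Hxy; now rewrite <- Z.mod_pow_l, Hxy, Z.mod_pow_l. Qed.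

Lemma P_eqm N a a' b b' c c' d d' :
  eqm N a a' -> eqm N b b' -> eqm N c c' -> eqm N d d' ->
  eqm N (P a b c d) (P a' b' c' d').
Proof.
  intros; unfold P.
  repeat first [ apply Zminus_eqm | apply Zplus_eqm | apply Zmult_eqm | apply Zpow_eqm
               | assumption | reflexivity ].
Qed.

Lemma eqm_divide m n x y : (m | n) -> eqm n x y -> eqm m x y.
Proof.
  unfold eqm; intros m_n Hxy.
  now rewrite <- (Z.mod_mod_divide x n m), <- (Z.mod_mod_divide y n m), Hxy.
Qed.

Definition disc_cases (a b c d : Z) : Prop :=
  (inO a /\ inO b /\ inO c /\ inO d /\ in2O (a + b + c + d))
  \/ (inE b /\ inE c /\ in2O (a * d))
  \/ (in2E a /\ in2O b /\ inO c)
  \/ (in2E d /\ in2O c /\ inO b)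
  \/ (inO (b + c) /\ in2E (a + c) /\ in2E (b + d)).

Definition disc_casesb (a b c d : Z) : bool :=
  (a mod 2 =? 1) && (b mod 2 =? 1) && (c mod 2 =? 1) && (d mod 2 =? 1)
    && ((a + b + c + d) mod 4 =? 2)
  || (b mod 2 =? 0) && (c mod 2 =? 0) && ((a * d) mod 4 =? 2)
  || (a mod 4 =? 0) && (b mod 4 =? 2) && (c mod 2 =? 1)
  || (d mod 4 =? 0) && (c mod 4 =? 2) && (b mod 2 =? 1)
  || ((b + c) mod 2 =? 1) && ((a + c) mod 4 =? 0) && ((b + d) mod 4 =? 0).

Lemma disc_casesP a b c d : disc_cases a b c d <-> disc_casesb a b c d = true.
Proof.
  unfold disc_cases, disc_casesb.
  rewrite !orb_true_iff, !andb_true_iff, !Z.eqb_eq,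
    !inO_iff_mod2, !inE_iff_mod2, !in2O_iff_mod4, !in2E_iff_mod4.
  tauto.
Qed.

Lemma disc_casesb_eqm16 a a' b b' c c' d d' :
  eqm 16 a a' -> eqm 16 b b' -> eqm 16 c c' -> eqm 16 d d' ->
  disc_casesb a b c d = disc_casesb a' b' c' d'.
Proof.
  intros Ha Hb Hc Hd.
  assert (mod2 : forall x y, eqm 16 x y -> x mod 2 = y mod 2)
    by (intros x y; apply eqm_divide; exists 8; reflexivity).
  assert (mod4 : forall x y, eqm 16 x y -> x mod 4 = y mod 4)
    by (intros x y; apply eqm_divide; exists 4; reflexivity).
  unfold disc_casesb.
  rewrite (mod2 a a'), (mod2 b b'), (mod2 c c'), (mod2 d d'),
    (mod4 a a'), (mod4 b b'), (mod4 c c'), (mod4 d d'),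
    (mod4 (a + b + c + d) (a' + b' + c' + d')), (mod4 (a * d) (a' * d')),
    (mod2 (b + c) (b' + c')), (mod4 (a + c) (a' + c')), (mod4 (b + d) (b' + d'));
  repeat first [ apply Zplus_eqm | apply Zmult_eqm | assumption | reflexivity ].
Qed.

Definition residues (n : nat) : list Z := map Z.of_nat (seq 0 n).

Lemma in_residues n x : 0 <= x < Z.of_nat n -> In x (residues n).
Proof.
  intros Hx; apply in_map_iff; exists (Z.to_nat x); split.
  - apply Z2Nat.id; lia.
  - apply in_seq; lia.
Qed.

Lemma forallb_residues n (f : Z -> bool) x :
  forallb f (residues n) = true -> 0 <= x < Z.of_nat n -> f x = true.
Proof. rewrite forallb_forall; intros Hf Hx; exact (Hf x (in_residues n x Hx)). Qed.

Lemma disc_mod16_table :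
  forallb (fun a => forallb (fun b => forallb (fun c => forallb (fun d =>
    Bool.eqb (P a b c d mod 16 =? 4) (disc_casesb a b c d))
  (residues 16)) (residues 16)) (residues 16)) (residues 16) = true.
Proof. vm_compute; reflexivity. Qed.

Lemma disc_mod16_residues a b c d :
  0 <= a < 16 -> 0 <= b < 16 -> 0 <= c < 16 -> 0 <= d < 16 ->
  (P a b c d mod 16 =? 4) = disc_casesb a b c d.
Proof.
  intros Ha Hb Hc Hd; apply Bool.eqb_prop.
  pose proof disc_mod16_table as table.
  apply (forallb_residues 16 _ a) in table; [| exact Ha].
  apply (forallb_residues 16 _ b) in table; [| exact Hb].
  apply (forallb_residues 16 _ c) in table; [| exact Hc].
  apply (forallb_residues 16 _ d) in table; [| exact Hd].
  exact table.
Qed.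

Theorem lemma2p5 (a b c d : Z) :
  P a b c d mod 16 = 4 <->
  ((inO a /\ inO b /\ inO c /\ inO d /\ in2O (a + b + c + d))
   \/ (inE b /\ inE c /\ in2O (a * d))
   \/ (in2E a /\ in2O b /\ inO c)
   \/ (in2E d /\ in2O c /\ inO b)
   \/ (inO (b + c) /\ in2E (a + c) /\ in2E (b + d))).
Proof.
  change (P a b c d mod 16 = 4 <-> disc_cases a b c d).
  pose proof (fun x => eqm_sym 16 _ _ (Zmod_eqm 16 x)) as mod16.
  rewrite disc_casesP, <- Z.eqb_eq,
    (P_eqm 16 _ _ _ _ _ _ _ _ (mod16 a) (mod16 b) (mod16 c) (mod16 d)),
    (disc_casesb_eqm16 _ _ _ _ _ _ _ _ (mod16 a) (mod16 b) (mod16 c) (mod16 d)).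
  now rewrite disc_mod16_residues by (apply Z.mod_pos_bound; lia).
Qed.
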